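(* Let $(A,\mathcal H)$ be a commutative Hopf algebroid and $I\subseteq\mathcal H$ a Hopf ideal. Then $I$ is normal if and only if $\langle s-t\rangle\subseteq I$ and $\mathcal H/I\cong\overline{\mathcal H}/\bar I$ is a quotient right $\mathcal H$-comodule of $\overline{\mathcal H}$ with respect to the coaction $\delta:\overline{\mathcal H}\to\overline{\mathcal H}\otimes_A\mathcal H$, $\bar h\mapsto\sum\overline{h_2}\otimes_A\mathcal S(h_1)h_3$, i.e. there is a map $\tilde\delta:\overline{\mathcal H}/\bar I\to(\overline{\mathcal H}/\bar I)\otimes_A\mathcal H$ with $\tilde\delta\circ p=(p\otimes_A\mathcal H)\circ\delta$, where $p:\overline{\mathcal H}\to\overline{\mathcal H}/\bar I$ is the projection.
   Context: A commutative Hopf algebroid $(A,\mathcal H)$ over a field $\Bbbk$: commutative $\Bbbk$-algebras $A,\mathcal H$ with algebra maps $s,t:A\to\mathcal H$, $\varepsilon:\mathcal H\to A$, $\Delta:\mathcal H\to\mathcal H\otimes_A\mathcal H$ (left factor an $A$-module via $t$, right via $s$), $\mathcal S:\mathcal H\to\mathcal H$ such that $(\mathcal H,\Delta,\varepsilon)$ is a coassociative counital $A$-coring, $\mathcal Ss=t$, $\mathcal St=s$, $\mathcal S^2=\mathrm{id}$, $\sum\mathcal S(u_1)u_2=t\varepsilon(u)$, $\sum u_1\mathcal S(u_2)=s\varepsilon(u)$ ($\Delta(u)=\sum u_1\otimes_Au_2$). A Hopf ideal: ideal $I$ with $\varepsilon(I)=0$, $\Delta(I)\subseteq$ image of $\mathcal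 H\otimes_AI+I\otimes_A\mathcal H$, $\mathcal S(I)\subseteq I$. $\langle s-t\rangle$ is the ideal generated by all $s(a)-t(a)$; $\overline{\mathcal H}=\mathcal H/\langle s-t\rangle$ with classes $\bar x$, an $A$-algebra via $\eta(a)=\overline{s(a)}=\overline{t(a)}$; $\bar I=I/\langle s-t\rangle$. The map $\delta$ above is a well-defined right $\mathcal H$-coaction making $\overline{\mathcal H}$ a right $\mathcal H$-comodule algebra; tensor products $-\otimes_A\mathcal H$ use the $A$-module structure via $\eta$ on the left factor and via $s$ on $\mathcal H$. $I$ is normal if $\langle s-t\rangle\subseteq I$ and for every $x\in I$, $\sum\overline{x_2}\otimes_A\mathcal S(x_1)x_3$ lies in the image of $\bar I\otimes_A\mathcal H$ in $\overline{\mathcal H}\otimes_A\mathcal H$. *)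

From HB Require Import structures.
From mathcomp Require Import all_boot all_order all_algebra.

Set Implicit Arguments.
Unset Strict Implicit.
Unset Printing Implicit Defensive.

Import GRing.Theory.
Local Open Scope ring_scope.

(* Tensor products over a commutative ring A, by generators and relations.  *)
(* An element of M ⊗_A N is represented by a finite formal sum             *)
(* Σ m_i ⊗ n_i, i.e. a list of pairs; [tens_eq] is the congruence on such   *)
(* lists generated by the defining relations of the tensor product.         *)
(* M and N may themselves be given as quotients ("setoids"): eqM / eqN is   *)
(* the equality of the quotient module on representatives (it must be a    *)
(* congruence; the generator [te_congl]/[te_congr] identifies equal classes).*)
(* actM a m is the A-action on the (right) module M, actN a n the action on *)
(* the (left) module N, so that the balancing relation is                   *)
(*   (actM a m) ⊗ n = m ⊗ (actN a n).                                        *)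
Section Tensor.
Variables (A : comPzRingType) (M N : zmodType).
Variables (eqM : M -> M -> Prop) (eqN : N -> N -> Prop).
Variables (actM : A -> M -> M) (actN : A -> N -> N).

Inductive tens_eq : seq (M * N) -> seq (M * N) -> Prop :=
| te_refl s : tens_eq s s
| te_sym s1 s2 : tens_eq s1 s2 -> tens_eq s2 s1
| te_trans s1 s2 s3 : tens_eq s1 s2 -> tens_eq s2 s3 -> tens_eq s1 s3
| te_cat s1 s2 t1 t2 :
    tens_eq s1 s2 -> tens_eq t1 t2 -> tens_eq (s1 ++ t1) (s2 ++ t2)
| te_comm s t : tens_eq (s ++ t) (t ++ s)
| te_addl m1 m2 n : tens_eq [:: (m1 + m2, n)] [:: (m1, n); (m2, n)]
| te_addr m n1 n2 : tens_eq [:: (m, n1 + n2)] [:: (m, n1); (m, n2)]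
| te_zerol n : tens_eq [:: (0, n)] [::]
| te_zeror m : tens_eq [:: (m, 0)] [::]
| te_bal a m n : tens_eq [:: (actM a m, n)] [:: (m, actN a n)]
| te_congl m m' n : eqM m m' -> tens_eq [:: (m, n)] [:: (m', n)]
| te_congr m n n' : eqN n n' -> tens_eq [:: (m, n)] [:: (m, n')].

End Tensor.

Section Tensor3.
Variables (A : comPzRingType) (M N P : zmodType).
Variables (actMr : A -> M -> M) (actNl actNr : A -> N -> N) (actPl : A -> P -> P).

Inductive tens3_eq : seq (M * N * P) -> seq (M * N * P) -> Prop :=
| t3_refl s : tens3_eq s s
| t3_sym s1 s2 : tens3_eq s1 s2 -> tens3_eq s2 s1
| t3_trans s1 s2 s3 : tens3_eq s1 s2 -> tens3_eq s2 s3 -> tens3_eq s1 s3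
| t3_cat s1 s2 t1 t2 :
    tens3_eq s1 s2 -> tens3_eq t1 t2 -> tens3_eq (s1 ++ t1) (s2 ++ t2)
| t3_comm s t : tens3_eq (s ++ t) (t ++ s)
| t3_add1 m1 m2 n p : tens3_eq [:: (m1 + m2, n, p)] [:: (m1, n, p); (m2, n, p)]
| t3_add2 m n1 n2 p : tens3_eq [:: (m, n1 + n2, p)] [:: (m, n1, p); (m, n2, p)]
| t3_add3 m n p1 p2 : tens3_eq [:: (m, n, p1 + p2)] [:: (m, n, p1); (m, n, p2)]
| t3_zero1 n p : tens3_eq [:: (0, n, p)] [::]
| t3_zero2 m p : tens3_eq [:: (m, 0, p)] [::]
| t3_zero3 m n : tens3_eq [:: (m, n, 0)] [::]
| t3_bal12 a m n p : tens3_eq [:: (actMr a m, n, p)] [:: (m, actNl a n, p)]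
| t3_bal23 a m n p : tens3_eq [:: (m, actNr a n, p)] [:: (m, n, actPl a p)].

End Tensor3.

Section HopfAlgebroid.
Variables (k : fieldType) (A H : comAlgType k).
Variables (s t : {lrmorphism A -> H}).

(* H ⊗_A H : left factor an A-module via t, right factor via s. *)
Definition HH_eq : seq (H * H) -> seq (H * H) -> Prop :=
  tens_eq (@eq H) (@eq H) (fun a h => h * t a) (fun a h => s a * h).

Definition HHH_eq : seq (H * H * H) -> seq (H * H * H) -> Prop :=
  tens3_eq (fun a h => h * t a) (fun a h => s a * h) (fun a h => h * t a)
           (fun a h => s a * h).

Definition st_ideal (x : H) : Prop :=
  exists r : seq (H * A), x = \sum_(p <- r) p.1 * (s p.2 - t p.2).

Definition is_ideal (I : H -> Prop) : Prop :=
  [/\ I 0, (forall x y, I x -> I y -> I (x + y)) & (forall a x, I x -> I (a * x))].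

(* Delta u is a representative (a finite formal sum) of Δ(u) ∈ H ⊗_A H.      *)
Record hopf_algebroid (eps : {lrmorphism H -> A}) (Delta : H -> seq (H * H))
    (S : {lrmorphism H -> H}) : Prop := HopfAlgebroid {
  ha_Delta_add : forall u v, HH_eq (Delta (u + v)) (Delta u ++ Delta v);
  ha_Delta_scale : forall (c : k) u,
    HH_eq (Delta (c *: u)) [seq (c *: p.1, p.2) | p <- Delta u];
  ha_Delta_mul : forall u v,
    HH_eq (Delta (u * v)) [seq (p.1 * q.1, p.2 * q.2) | p <- Delta u, q <- Delta v];
  ha_Delta_one : HH_eq (Delta 1) [:: (1, 1)];
  ha_Delta_sl : forall a u,
    HH_eq (Delta (s a * u)) [seq (s a * p.1, p.2) | p <- Delta u];
  ha_Delta_tr : forall a u,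
    HH_eq (Delta (t a * u)) [seq (p.1, p.2 * t a) | p <- Delta u];
  ha_eps_sl : forall a u, eps (s a * u) = a * eps u;
  ha_eps_tr : forall a u, eps (t a * u) = eps u * a;
  ha_coassoc : forall u,
    HHH_eq [seq (q.1, q.2, p.2) | p <- Delta u, q <- Delta p.1]
           [seq (p.1, q.1, q.2) | p <- Delta u, q <- Delta p.2];
  ha_counit_l : forall u, \sum_(p <- Delta u) s (eps p.1) * p.2 = u;
  ha_counit_r : forall u, \sum_(p <- Delta u) p.1 * t (eps p.2) = u;
  ha_S_s : forall a, S (s a) = t a;
  ha_S_t : forall a, S (t a) = s a;
  ha_S_invol : forall u, S (S u) = u;
  ha_S_l : forall u, \sum_(p <- Delta u) S p.1 * p.2 = t (eps u);
  ha_S_r : forall u, \sum_(p <- Delta u) p.1 * S p.2 = s (eps u)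
}.

Definition hopf_ideal (eps : {lrmorphism H -> A}) (Delta : H -> seq (H * H))
    (S : {lrmorphism H -> H}) (I : H -> Prop) : Prop :=
  [/\ is_ideal I,
      (forall x, I x -> eps x = 0),
      (forall x, I x -> exists r : seq (H * H),
          (forall p, p \in r -> I p.2 \/ I p.1) /\ HH_eq (Delta x) r)
    & (forall x, I x -> I (S x))].

(* Hbar = H / <s - t>, represented by elements of H; Hbar ⊗_A H, where Hbar *)
(* is an A-module via eta(a) = class of s(a), and H via s.                   *)
Definition barH_eq (x y : H) : Prop := st_ideal (x - y).

Definition HbarH_eq : seq (H * H) -> seq (H * H) -> Prop :=
  tens_eq barH_eq (@eq H) (fun a h => s a * h) (fun a h => s a * h).

Definition barI (I : H -> Prop) (x : H) : Prop :=
  exists i, I i /\ barH_eq x i.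

(* Hbar / Ibar, represented by elements of H:  x̄ ≡ ȳ mod Ī. *)
Definition quotI_eq (I : H -> Prop) (x y : H) : Prop := barI I (x - y).

Definition QH_eq (I : H -> Prop) : seq (H * H) -> seq (H * H) -> Prop :=
  tens_eq (quotI_eq I) (@eq H) (fun a h => s a * h) (fun a h => s a * h).

(* The coaction delta(h̄) = Σ h̄_2 ⊗ S(h_1) h_3, on a representative h,        *)
(* computed from the representative Σ h_1 ⊗ h_2 ⊗ h_3 of (Δ ⊗ id)Δ(h).        *)
Definition coact (Delta : H -> seq (H * H)) (S : {lrmorphism H -> H}) (h : H)
  : seq (H * H) :=
  [seq (q.2, S q.1 * p.2) | p <- Delta h, q <- Delta p.1].

Definition normal_ideal (Delta : H -> seq (H * H)) (S : {lrmorphism H -> H})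
    (I : H -> Prop) : Prop :=
  (forall x, st_ideal x -> I x) /\
  (forall x, I x -> exists r : seq (H * H),
      (forall p, p \in r -> I p.1) /\ HbarH_eq (coact Delta S x) r).

End HopfAlgebroid.

From HB Require Import structures.
From mathcomp Require Import all_boot all_order all_algebra.

(* The coaction delta is well defined on Hbar ⊗_A H-representatives and
   additive, so it descends along p exactly when delta(I) lands in the image
   of Ibar ⊗_A H.  That image is precisely the kernel of
   p ⊗_A H : Hbar ⊗_A H -> (Hbar/Ibar) ⊗_A H (right exactness of the tensor
   product), which gives both implications: if I is normal, delta(x) and
   delta(y) differ by an element of Ibar ⊗_A H whenever xbar = ybar mod Ibar;
   conversely, if delta descends, delta(x) for x in I is sent to
   dt(0) = (p ⊗_A H)(delta(0)) = 0, hence lies in that kernel. *)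

Set Implicit Arguments.
Unset Strict Implicit.
Unset Printing Implicit Defensive.

Import GRing.Theory.
Local Open Scope ring_scope.

Section TensorEq.
Variables (A : comPzRingType) (M N : zmodType).
Variables (eqM : M -> M -> Prop) (eqN : N -> N -> Prop).
Variables (actM : A -> M -> M) (actN : A -> N -> N).
Local Notation teq := (tens_eq eqM eqN actM actN).

Lemma tens_eq_perm s1 s2 : perm_eq s1 s2 -> teq s1 s2.
Proof.
elim: s1 s2 => [|x s1 IH] s2 hp.
  have -> : s2 = [::] by apply/nilP; rewrite /nilp -(perm_size hp).
  exact: te_refl.
have x_s2 : x \in s2 by rewrite -(perm_mem hp) mem_head.
case/splitPr: x_s2 hp => t1 t2 hp; have hp' : perm_eq s1 (t1 ++ t2).
  by rewrite -(perm_cons x) (perm_trans hp) // perm_catC /= perm_cons perm_catC.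
apply: te_trans (te_cat (te_refl _ _ _ _ [:: x]) (IH _ hp')) _.
rewrite -[t1 ++ x :: t2]/(t1 ++ [:: x] ++ t2) !catA.
by apply: te_cat; [exact: te_comm | exact: te_refl].
Qed.

Lemma tens_eq_map (X : Type) (f g : X -> M * N) (l : seq X) :
  (forall x, teq [:: f x] [:: g x]) -> teq (map f l) (map g l).
Proof.
move=> hfg; elim: l => [|x l IH] /=; first exact: te_refl.
exact: te_cat (hfg x) IH.
Qed.

Lemma tens_eq_zerol (X : Type) (f : X -> N) (l : seq X) :
  teq [seq (0, f x) | x <- l] [::].
Proof.
elim: l => [|x l IH] /=; first exact: te_refl.
exact: te_cat (te_zerol _ _ _ _ (f x)) IH.
Qed.

Lemma tens_eq_zeror (X : Type) (f : X -> M) (l : seq X) :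
  teq [seq (f x, 0) | x <- l] [::].
Proof.
elim: l => [|x l IH] /=; first exact: te_refl.
exact: te_cat (te_zeror _ _ _ _ (f x)) IH.
Qed.

Lemma tens_eq_subrr (l : seq (M * N)) :
  teq (l ++ [seq (- p.1, p.2) | p <- l]) [::].
Proof.
elim: l => [|[m n] l IH] /=; first exact: te_refl.
apply: te_trans (tens_eq_perm (_ : perm_eq _ ([:: (m, n); (- m, n)] ++ (l ++ _)))) _.
  by rewrite /= perm_cons perm_catC /= perm_cons perm_catC.
have mn_subrr : teq [:: (m, n); (- m, n)] [::].
  by apply: te_trans (te_sym (te_addl _ _ _ _ _ _ _)) _; rewrite subrr; exact: te_zerol.
exact: te_cat mn_subrr IH.
Qed.

End TensorEq.

Lemma tens_eq_mono (A : comPzRingType) (M N : zmodType)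
    (eqM eqM' : M -> M -> Prop) (eqN : N -> N -> Prop)
    (actM : A -> M -> M) (actN : A -> N -> N) s1 s2 :
  (forall m m', eqM m m' -> eqM' m m') ->
  tens_eq eqM eqN actM actN s1 s2 -> tens_eq eqM' eqN actM actN s1 s2.
Proof. by move=> hM; elim=> *; [constructor; auto | econstructor; eauto ..]. Qed.

Section Coaction.
Variables (k : fieldType) (A H : comAlgType k) (s t : {lrmorphism A -> H}).
Variables (S : {lrmorphism H -> H}) (Delta : H -> seq (H * H)).

Lemma st_ideal0 : st_ideal s t 0.
Proof. by exists [::]; rewrite big_nil. Qed.

Lemma barH_eq_ts a h : barH_eq s t (h * t a) (s a * h).
Proof.
exists [:: (- h, a)]; rewrite big_seq1 /=.
by rewrite mulNr mulrBr opprB mulrC [h * s a]mulrC.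
Qed.

Definition swapS (n : H) (l : seq (H * H)) : seq (H * H) :=
  [seq (q.2, S q.1 * n) | q <- l].

(* The map H ⊗_A H -> Hbar ⊗_A H, u ⊗ v |-> Σ (u_2)bar ⊗ S(u_1) v, so that
   coact h = coactHH (Delta h). *)
Definition coactHH (l : seq (H * H)) : seq (H * H) :=
  flatten [seq swapS p.2 (Delta p.1) | p <- l].

Lemma coactHH_cat l1 l2 : coactHH (l1 ++ l2) = coactHH l1 ++ coactHH l2.
Proof. by rewrite /coactHH map_cat flatten_cat. Qed.

Lemma swapS_tens_eq (StS : forall a, S (t a) = s a) n l1 l2 :
  HH_eq s t l1 l2 -> HbarH_eq s t (swapS n l1) (swapS n l2).
Proof.
elim=> /=.
- by move=> *; exact: te_refl.
- by move=> *; exact: te_sym.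
- by move=> *; apply: te_trans; eauto.
- by move=> *; rewrite /swapS !map_cat; apply: te_cat.
- by move=> *; rewrite /swapS !map_cat; apply: te_comm.
- by move=> u1 u2 v; rewrite rmorphD mulrDl; apply: te_addr.
- by move=> u v1 v2; apply: te_addl.
- by move=> v; rewrite rmorph0 mul0r; apply: te_zeror.
- by move=> u; apply: te_zerol.
- move=> a u v /=; rewrite rmorphM.
  have -> : S u * S (t a) * n = s a * (S u * n) by rewrite StS mulrAC mulrC.
  exact/te_sym/te_bal.
- by move=> u u' v ->; apply: te_refl.
- by move=> u v v' ->; apply: te_refl.
Qed.

Lemma swapS_addn n1 n2 l :
  HbarH_eq s t (swapS (n1 + n2) l) (swapS n1 l ++ swapS n2 l).
Proof.
elim: l => [|[u v] l IH] /=; first exact: te_refl.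
rewrite mulrDr -cat1s.
apply: te_trans (te_cat (te_addr _ _ _ _ v (S u * n1) (S u * n2)) IH) _.
by apply: tens_eq_perm; rewrite /= perm_cons -cat1s perm_catCA.
Qed.

Lemma swapS_0n l : HbarH_eq s t (swapS 0 l) [::].
Proof. by rewrite /swapS; under eq_map do rewrite mulr0; exact: tens_eq_zeror. Qed.

Variable eps : {lrmorphism H -> A}.
Hypothesis hA : hopf_algebroid s t eps Delta S.

Lemma Delta0 : HH_eq s t (Delta 0) [::].
Proof.
have := ha_Delta_scale hA 0 0; rewrite scale0r => /te_trans; apply.
under eq_map do rewrite scale0r.
exact: tens_eq_zerol.
Qed.

Lemma coactHH_tens_eq l1 l2 :
  HH_eq s t l1 l2 -> HbarH_eq s t (coactHH l1) (coactHH l2).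
Proof.
have StS := ha_S_t hA; elim=> /=.
- by move=> *; exact: te_refl.
- by move=> *; exact: te_sym.
- by move=> *; apply: te_trans; eauto.
- by move=> *; rewrite !coactHH_cat; apply: te_cat.
- by move=> *; rewrite !coactHH_cat; apply: te_comm.
- move=> u1 u2 v; rewrite /coactHH /= !cats0 /swapS -map_cat.
  exact: (swapS_tens_eq StS v (ha_Delta_add hA u1 u2)).
- by move=> u v1 v2; rewrite /coactHH /= !cats0; exact: swapS_addn.
- by move=> v; rewrite /coactHH /= !cats0; exact: (swapS_tens_eq StS v Delta0).
- by move=> u; rewrite /coactHH /= !cats0; exact: swapS_0n.
- move=> a u v; rewrite /coactHH /= !cats0 mulrC.
  apply: (te_trans (swapS_tens_eq StS v (ha_Delta_tr hA a u))).
  rewrite /swapS -map_comp; apply: tens_eq_map => -[u1 u2] /=.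
  apply: te_trans (te_congl _ _ _ _ (barH_eq_ts a u2)) _.
  by rewrite mulrCA; exact: te_bal.
- by move=> u u' v ->; apply: te_refl.
- by move=> u v v' ->; apply: te_refl.
Qed.

Lemma coactD u v :
  HbarH_eq s t (coact Delta S (u + v)) (coact Delta S u ++ coact Delta S v).
Proof. by rewrite -coactHH_cat; exact: coactHH_tens_eq (ha_Delta_add hA u v). Qed.

Lemma coact0 : HbarH_eq s t (coact Delta S 0) [::].
Proof. exact: coactHH_tens_eq Delta0. Qed.

End Coaction.

Section QuotientByIdeal.
Variables (k : fieldType) (A H : comAlgType k) (s t : {lrmorphism A -> H}).
Variables (I : H -> Prop).
Hypothesis hI : is_ideal I.

Lemma quotI_eq_I x y :
  (forall z, st_ideal s t z -> I z) -> quotI_eq s t I x y -> I (x - y).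
Proof.
case: hI => _ ID _ stI [i [Ii hi]].
by rewrite -(subrK i (x - y)); apply: ID => //; apply: stI.
Qed.

Lemma quotI_eq0 x : I x -> quotI_eq s t I x 0.
Proof. by exists x; rewrite /barH_eq subr0 subrr; split; last exact: st_ideal0. Qed.

Lemma HbarH_eq_QH l1 l2 : HbarH_eq s t l1 l2 -> QH_eq s t I l1 l2.
Proof.
case: hI => I0 _ _; apply: tens_eq_mono => m m' h.
by exists 0; rewrite /barH_eq subr0.
Qed.

Lemma QH_eq_nil r : {in r, forall p, I p.1} -> QH_eq s t I r [::].
Proof.
elim: r => [|[u v] r IH] hr /=; first exact: te_refl.
rewrite -cat1s -[@nil (H * H)]/([::] ++ [::]).
apply: te_cat; last by apply: IH => p hp; apply: hr; rewrite in_cons hp orbT.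
apply: te_trans (te_zerol _ _ _ _ v); apply: te_congl.
by apply: quotI_eq0; exact: (hr (u, v) (mem_head _ _)).
Qed.

Definition HbarH_eq_modI (l1 l2 : seq (H * H)) : Prop :=
  exists2 r, {in r, forall p, I p.1} & HbarH_eq s t l1 (l2 ++ r).

Lemma HbarH_eq_modI_refl l1 l2 : HbarH_eq s t l1 l2 -> HbarH_eq_modI l1 l2.
Proof. by exists [::]; rewrite ?cats0. Qed.

Lemma HbarH_eq_modI_sym l1 l2 : HbarH_eq_modI l1 l2 -> HbarH_eq_modI l2 l1.
Proof.
case: hI => _ _ IM [r hr h]; exists [seq (- p.1, p.2) | p <- r].
  by move=> _ /mapP[p pr ->] /=; rewrite -mulN1r; apply/IM/hr.
apply/te_sym/(te_trans (te_cat h (te_refl _ _ _ _ _))).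
rewrite -catA -[X in tens_eq _ _ _ _ _ X]cats0.
exact: te_cat (te_refl _ _ _ _ _) (tens_eq_subrr _ _ _ _ _).
Qed.

Lemma HbarH_eq_modI_trans l1 l2 l3 :
  HbarH_eq_modI l1 l2 -> HbarH_eq_modI l2 l3 -> HbarH_eq_modI l1 l3.
Proof.
move=> [r hr h] [r' hr' h']; exists (r' ++ r).
  by move=> p; rewrite mem_cat => /orP[]; [apply: hr' | apply: hr].
by apply: te_trans h _; rewrite catA; apply: te_cat h' (te_refl _ _ _ _ _).
Qed.

Lemma HbarH_eq_modI_cat l1 l2 l1' l2' : HbarH_eq_modI l1 l2 ->
  HbarH_eq_modI l1' l2' -> HbarH_eq_modI (l1 ++ l1') (l2 ++ l2').
Proof.
move=> [r hr h] [r' hr' h']; exists (r ++ r').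
  by move=> p; rewrite mem_cat => /orP[]; [apply: hr | apply: hr'].
by apply: te_trans (te_cat h h') _; apply: tens_eq_perm; rewrite perm_catACA.
Qed.

Lemma QH_eq_modI l1 l2 : QH_eq s t I l1 l2 -> HbarH_eq_modI l1 l2.
Proof.
elim.
- by move=> *; apply/HbarH_eq_modI_refl/te_refl.
- by move=> *; apply: HbarH_eq_modI_sym.
- by move=> *; apply: HbarH_eq_modI_trans; eauto.
- by move=> *; apply: HbarH_eq_modI_cat.
- by move=> *; apply/HbarH_eq_modI_refl/te_comm.
- by move=> *; apply/HbarH_eq_modI_refl/te_addl.
- by move=> *; apply/HbarH_eq_modI_refl/te_addr.
- by move=> *; apply/HbarH_eq_modI_refl/te_zerol.
- by move=> *; apply/HbarH_eq_modI_refl/te_zeror.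
- by move=> *; apply/HbarH_eq_modI_refl/te_bal.
- move=> m m' n [i [Ii hi]]; exists [:: (i, n)] => [p|].
    by rewrite mem_seq1 => /eqP ->.
  apply: te_trans (te_addl _ _ _ _ _ _ _); apply: te_congl.
  by move: hi; rewrite /barH_eq opprD addrA.
- by move=> m n n' ->; apply/HbarH_eq_modI_refl/te_refl.
Qed.

End QuotientByIdeal.

Theorem proposition3p18 (k : fieldType) (A H : comAlgType k)
    (s t : {lrmorphism A -> H}) (eps : {lrmorphism H -> A})
    (Delta : H -> seq (H * H)) (S : {lrmorphism H -> H}) (I : H -> Prop) :
  hopf_algebroid s t eps Delta S ->
  hopf_ideal s t eps Delta S I ->
  (normal_ideal s t Delta S I <->
   ((forall x, st_ideal s t x -> I x) /\
    exists dt : H -> seq (H * H),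
      (forall x y, quotI_eq s t I x y -> QH_eq s t I (dt x) (dt y)) /\
      (forall h, QH_eq s t I (dt h) (coact Delta S h)))).
Proof.
move=> hA [hI _ _ _]; split.
- move=> [stI normalI]; split=> //; exists (coact Delta S); split=> [x y xy|h].
    have [r [hr coact_xy]] := normalI _ (quotI_eq_I hI stI xy).
    rewrite -(subrK y x) addrC.
    apply: te_trans (HbarH_eq_QH hI (coactD hA y (x - y))) _.
    rewrite -[X in tens_eq _ _ _ _ _ X]cats0.
    apply: te_cat (te_refl _ _ _ _ _) _.
    exact: te_trans (HbarH_eq_QH hI coact_xy) (QH_eq_nil s t hr).
  exact: te_refl.
- move=> [stI [dt [dt_quotI dt_coact]]]; split=> // x Ix.
  have coact_x0 : QH_eq s t I (coact Delta S x) [::].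
    apply: te_trans (te_sym (dt_coact x)) _.
    apply: te_trans (dt_quotI _ _ (quotI_eq0 s t Ix)) _.
    exact: te_trans (dt_coact 0) (HbarH_eq_QH hI (coact0 hA)).
  by have [r] := QH_eq_modI hI coact_x0; exists r.
Qed.
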